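(* Let $d$ be even, let $n>2d$ be prime, let $\omega=e^{2\pi i/n}$, and let $T$ be a $d\times d$ Cauchy matrix over $\mathbb{F}_n$. Define the $n^d\times n^d$ complex matrix $W_T$ by $(W_T)_{(i_1,\dots,i_d),(j_1,\dots,j_d)}=\omega^{(i_1,\dots,i_d)\,T\,(j_1,\dots,j_d)^{\top}}$ (the exponent computed in $\mathbb{F}_n$). Then for every $\kappa\subseteq[d]$, the matrix $W_T^{\top_\kappa}$ has rank $n^d$.
   Context: A Cauchy matrix over $\mathbb{F}_n$ is $T_{ab}=1/(x_a-y_b)$ for pairwise distinct elements $x_1,\dots,x_d,y_1,\dots,y_d\in\mathbb{F}_n$; every square submatrix of it is nonsingular. Indices $i_k,j_k\in[n]$ are regarded as elements of $\mathbb{F}_n$. For $k\in[d]$, $M^{\top_k}_{(i_1,\dots,i_d),(j_1,\dots,j_d)}=M_{(\dots,i_{k-1},j_k,i_{k+1},\dots),(\dots,j_{k-1},i_k,j_{k+1},\dots)}$ and $M^{\top_\kappa}$ composes these over $k\in\kappa$. *)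

From mathcomp Require Import all_boot all_order all_algebra.
From mathcomp Require Import reals trigo.
From mathcomp Require Import complex.
Set Implicit Arguments. Unset Strict Implicit. Unset Printing Implicit Defensive.
Import GRing.Theory Num.Theory.
Local Open Scope ring_scope.
Local Open Scope complex_scope.

(* Multi-indices (i_1,...,i_d) with i_k in [n], regarded as elements of F_n. *)
Definition midx (d n : nat) := {ffun 'I_d -> 'F_n}.

Definition omega (R : realType) (n : nat) : R[i] :=
  (cos (2 * pi / n%:R)) +i* (sin (2 * pi / n%:R)).

Definition cauchy_mx (n d : nat) (x y : 'I_d -> 'F_n) : 'M['F_n]_d :=
  \matrix_(a, b) (x a - y b)^-1.

Definition bilin (n d : nat) (T : 'M['F_n]_d) (i j : midx d n) : 'F_n :=
  \sum_(a < d) \sum_(b < d) i a * T a b * j b.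

Definition W_T (R : realType) (n d : nat) (T : 'M['F_n]_d)
  (i j : midx d n) : R[i] :=
  omega R n ^+ (nat_of_ord (bilin T i j)).

Definition ptrans (C : Type) (n d : nat) (kappa : {set 'I_d})
  (M : midx d n -> midx d n -> C) (i j : midx d n) : C :=
  M [ffun k => if k \in kappa then j k else i k]
    [ffun k => if k \in kappa then i k else j k].

Definition to_mx (C : Type) (n d : nat) (M : midx d n -> midx d n -> C)
  : 'M[C]_#|{: midx d n}| :=
  \matrix_(a, b) M (enum_val a) (enum_val b).

From mathcomp Require Import all_boot all_order all_algebra.
From mathcomp Require Import reals trigo.
From mathcomp Require Import complex.
From mathcomp Require Import ring lra.
Import Order.TTheory GRing.Theory Num.Theory.
Local Open Scope ring_scope.
Local Open Scope complex_scope.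

(* Write the (i, j) entry of W_T^{T_kappa} as chi(E(i, j)), where chi(a) = omega^a
   is an additive character of F_n.  For fixed rows i, l the difference
   E(i, z) - E(l, z) is an affine function of the column index z whose linear
   part is (T[kappa, kappa] (i - l)|kappa, T[~kappa, ~kappa]^T (i - l)|~kappa).
   Square submatrices of a Cauchy matrix are nonsingular, so this linear part
   vanishes only when i = l.  The character sum of a nonconstant affine function
   over F_n^d is 0, so distinct rows of W_T^{T_kappa} are orthogonal and the
   matrix is invertible. *)

Section Omega.
Variable R : realType.
Context {n : nat}.

Lemma omegaX k :
  omega R n ^+ k = cos (k%:R * (2 * pi / n%:R)) +i* sin (k%:R * (2 * pi / n%:R)).
Proof.
elim: k => [|k IH]; first by rewrite expr0 !mul0r cos0 sin0.
rewrite exprS IH /omega; set t := 2 * pi / n%:R.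
rewrite -[k.+1]addn1 natrD (mulrDl _ _ t) mul1r addrC cosD sinD.
by rewrite {1}/GRing.mul /= [X in _ +i* X]addrC.
Qed.

Lemma omegaXn : (0 < n)%N -> omega R n ^+ n = 1.
Proof.
move=> n_gt0; rewrite omegaX.
have -> : n%:R * (2 * pi / n%:R) = pi *+ 2 :> R.
  by rewrite mulrCA divff ?pnatr_eq0 -?lt0n // mulr1 mulr_natl.
by rewrite cos2pi sin2pi.
Qed.

Lemma omega_neq1 : (1 < n)%N -> omega R n != 1.
Proof.
case: n => [//|[//|[|m]]] _; apply/eqP.
- move=> /(congr1 (@complex.Re R)) /=.
  have -> : 2 * pi / 2%:R = pi :> R by rewrite mulrC mulKf ?pnatr_eq0.
  by rewrite cospi; lra.
- move=> /(congr1 (@complex.Im R)) /= /eqP; rewrite gt_eqF // sin_gt0_pi //.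
  apply/andP; split.
    by apply: divr_gt0; [rewrite mulr_gt0 ?pi_gt0 | rewrite ltr0n].
  by rewrite ltr_pdivrMr ?ltr0n // [2 * pi]mulrC ltr_pM2l ?pi_gt0 // ltr_nat.
Qed.

End Omega.

Section AdditiveCharacter.
Variable R : realType.
Context {n : nat}.
Hypothesis n_prime : prime n.

Definition chi (a : 'F_n) : R[i] := omega R n ^+ a.

Lemma chi0 : chi 0 = 1.
Proof. by rewrite /chi expr0. Qed.

Lemma chiD a b : chi (a + b) = chi a * chi b.
Proof. by rewrite /chi -exprD /= expr_mod // Fp_cast // omegaXn // prime_gt0. Qed.

Lemma chi1 : chi 1 = omega R n.
Proof. by rewrite /chi /= Fp_cast // modn_small ?prime_gt1. Qed.

Lemma sum_chi_eq0 (G : finType) (h : G -> 'F_n) (s : G -> G) :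
  injective s -> (forall z, h (s z) = h z + 1) -> \sum_z chi (h z) = 0.
Proof.
move=> s_inj hs; set S := \sum_z _.
have : S = omega R n * S.
  rewrite {1}/S (reindex_inj s_inj) mulr_sumr; apply: eq_bigr => z _.
  by rewrite hs chiD chi1 mulrC.
move/eqP; rewrite -subr_eq0 -{1}[S]mul1r -mulrBl mulf_eq0 subr_eq0 eq_sym.
by rewrite (negbTE (omega_neq1 R (prime_gt1 n_prime))) => /eqP.
Qed.

Lemma sum_chi_affine_eq0 (I : finType) (c : 'F_n) (v : {ffun I -> 'F_n}) :
  v != 0 -> \sum_(z : {ffun I -> 'F_n}) chi (c + \sum_k z k * v k) = 0.
Proof.
move=> v_neq0; have [k0 vk0] : exists k0, v k0 != 0.
  apply/existsP; apply: contraNT v_neq0 => /existsPn v0.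
  by apply/eqP/ffunP => k; rewrite ffunE; apply/eqP/negPn.
pose s (z : {ffun I -> 'F_n}) := z + [ffun k => if k == k0 then (v k0)^-1 else 0].
apply: (@sum_chi_eq0 _ _ s) => [z z' /addIr // | z].
rewrite -addrA; congr (_ + _).
rewrite /s; under eq_bigr => k _ do rewrite !ffunE mulrDl.
rewrite big_split /=; congr (_ + _).
by rewrite (bigD1 k0) //= eqxx mulVf // big1 ?addr0 // => k /negbTE ->; rewrite mul0r.
Qed.

Lemma unitmx_chi_mx {d} {E c : midx d n -> midx d n -> 'F_n}
    {v : midx d n -> midx d n -> midx d n} :
  (forall i l z, E i z - E l z = c i l + \sum_k z k * v i l k) ->
  (forall i l, v i l = 0 -> i = l) ->
  to_mx (fun i j => chi (E i j)) \in unitmx.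
Proof.
move=> E_diff v_inj; set N := #|{: midx d n}|.
have N_neq0 : N%:R != 0 :> R[i].
  by rewrite pnatr_eq0 -lt0n; apply/card_gt0P; exists 0.
pose B : 'M[R[i]]_N := \matrix_(a, b) (N%:R^-1 * chi (- E (enum_val b) (enum_val a))).
suff /mulmx1_unit[] : to_mx (fun i j => chi (E i j)) *m B = 1%:M by [].
apply/matrixP => a b; rewrite !mxE.
transitivity (N%:R^-1 * \sum_z chi (E (enum_val a) z - E (enum_val b) z)).
  rewrite mulr_sumr (reindex (@enum_rank _)) /=; last exact: onW_bij (enum_rank_bij _).
  by apply: eq_bigr => z _; rewrite !mxE enum_rankK chiD mulrCA.
have [<-|a_neq_b] := eqVneq a b.
  under eq_bigr => z _ do rewrite subrr chi0.
  by rewrite sumr_const mulVf.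
under eq_bigr => z _ do rewrite E_diff.
rewrite sum_chi_affine_eq0 ?mulr0 //; apply: contra_neq a_neq_b => /v_inj.
exact: enum_val_inj.
Qed.

End AdditiveCharacter.

Lemma cauchy_sum_eq0 (F : fieldType) (I : finType) (S : {set I}) (f g c : I -> F) :
  {in S &, injective f} -> {in S &, injective g} ->
  (forall a b, a \in S -> b \in S -> f a != g b) ->
  (forall a, a \in S -> \sum_(b in S) c b / (f a - g b) = 0) ->
  {in S, forall b, c b = 0}.
Proof.
move=> f_inj g_inj fg_neq c_ker.
(* P has degree < #|S| and P.[f a] is prod_b (f a - g b) times the sum in
   c_ker, so P = 0; evaluating P at g b0 then isolates c b0. *)
pose L b := \prod_(b' in S :\ b) ('X - (g b')%:P).
pose P := \sum_(b in S) c b *: L b.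
have hornerL b x : (L b).[x] = \prod_(b' in S :\ b) (x - g b').
  by rewrite horner_prod; apply: eq_bigr => b' _; rewrite hornerXsubC.
have size_P : (size P <= #|S|)%N.
  apply: (big_ind (fun p : {poly F} => size p <= #|S|)%N) => [|p q|b bS].
  - by rewrite size_poly0.
  - by move=> *; apply: leq_trans (size_polyD _ _) _; rewrite geq_max; apply/andP.
  apply: leq_trans (size_scale_leq _ _) _.
  by rewrite /L -big_enum size_prod_XsubC -cardE (cardsD1 b S) bS.
have P_root a : a \in S -> root P (f a).
  move=> aS; apply/eqP; rewrite -[RHS](mulr0 (\prod_(b in S) (f a - g b))) -(c_ker a aS).
  rewrite horner_sum mulr_sumr; apply: eq_bigr => b bS.
  rewrite hornerZ hornerL (bigD1 b bS) /= mulrAC mulrCA divff ?mulr1.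
    by congr (_ * _); apply: eq_bigl => b'; rewrite !inE andbC.
  by rewrite subr_eq0 fg_neq.
have P0 : P = 0.
  apply: (@roots_geq_poly_eq0 _ _ [seq f a | a <- enum S]).
  - by apply/allP => z /mapP[a]; rewrite mem_enum => aS ->; exact: P_root.
  - by rewrite map_inj_in_uniq ?enum_uniq // => a b; rewrite !mem_enum; apply: f_inj.
  by rewrite size_map -cardE.
move=> b0 b0S; have /eqP := congr1 (horner^~ (g b0)) P0.
rewrite horner0 horner_sum (bigD1 b0 b0S) /= big1 ?addr0 => [|b /andP[bS b_neq]].
  rewrite hornerZ hornerL mulf_eq0 prodf_seq_eq0 => /orP[/eqP //|].
  case/hasP => b _ /andP[]; rewrite !inE => /andP[b_neq bS].
  by rewrite subr_eq0 => /eqP/esym/(g_inj _ _ bS b0S)/eqP; rewrite (negbTE b_neq).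
by rewrite hornerZ hornerL (bigD1 b0) /= ?subrr ?mul0r ?mulr0 // !inE eq_sym b_neq.
Qed.

Section PartialTranspose.
Context {n d : nat} (T : 'M['F_n]_d) (kappa : {set 'I_d}).

Lemma ptrans_bilin_blocks i z : ptrans kappa (bilin T) i z =
    \sum_(a in kappa) \sum_(b in kappa) z a * T a b * i b
  + \sum_(a in kappa) \sum_(b | b \notin kappa) z a * T a b * z b
  + (\sum_(a | a \notin kappa) \sum_(b in kappa) i a * T a b * i b
  + \sum_(a | a \notin kappa) \sum_(b | b \notin kappa) i a * T a b * z b).
Proof.
rewrite /ptrans /bilin (bigID (mem kappa)) /=.
congr (_ + _); rewrite -big_split /=; apply: eq_bigr => a aK;
  rewrite (bigID (mem kappa)) /=; congr (_ + _); apply: eq_bigr => b bK;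
  by rewrite !ffunE ?aK ?bK ?(negbTE aK) ?(negbTE bK).
Qed.

Definition ptrans_bilin_cst (i l : midx d n) : 'F_n :=
  \sum_(a | a \notin kappa) \sum_(b in kappa) (i a * T a b * i b - l a * T a b * l b).

Definition ptrans_bilin_slope (i l : midx d n) : midx d n :=
  [ffun k => if k \in kappa then \sum_(b in kappa) T k b * (i b - l b)
             else \sum_(b | b \notin kappa) (i b - l b) * T b k].

Lemma ptrans_bilinB i l z :
  ptrans kappa (bilin T) i z - ptrans kappa (bilin T) l z =
  ptrans_bilin_cst i l + \sum_k z k * ptrans_bilin_slope i l k.
Proof.
have -> : \sum_k z k * ptrans_bilin_slope i l k =
      \sum_(a in kappa) \sum_(b in kappa) (z a * T a b * i b - z a * T a b * l b)
    + \sum_(a | a \notin kappa) \sum_(b | b \notin kappa)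
        (i a * T a b * z b - l a * T a b * z b).
  rewrite (bigID (mem kappa)) /=; congr (_ + _).
    apply: eq_bigr => k kK; rewrite ffunE kK mulr_sumr.
    by apply: eq_bigr => b _; ring.
  rewrite exchange_big /=; apply: eq_bigr => k kK.
  rewrite ffunE (negbTE kK) mulr_sumr; apply: eq_bigr => b _; ring.
have sumsB (P Q : pred 'I_d) (F G : 'I_d -> 'I_d -> 'F_n) :
    \sum_(a | P a) \sum_(b | Q b) (F a b - G a b) =
    \sum_(a | P a) \sum_(b | Q b) F a b - \sum_(a | P a) \sum_(b | Q b) G a b.
  by rewrite -sumrB; apply: eq_bigr => a _; rewrite sumrB.
by rewrite !ptrans_bilin_blocks /ptrans_bilin_cst !sumsB; ring.
Qed.

End PartialTranspose.

Lemma ptrans_bilin_slope_cauchy_eq0 n d (x y : 'I_d -> 'F_n) (kappa : {set 'I_d})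
    (i l : midx d n) :
  injective x -> injective y -> (forall a b, x a != y b) ->
  ptrans_bilin_slope (cauchy_mx x y) kappa i l = 0 -> i = l.
Proof.
move=> x_inj y_inj xy_neq slope0.
have slope0_at k : ptrans_bilin_slope (cauchy_mx x y) kappa i l k = 0.
  by rewrite slope0 ffunE.
apply/ffunP => b; apply/eqP; rewrite -subr_eq0; apply/eqP.
have [bK | bNK] := boolP (b \in kappa).
  apply: (@cauchy_sum_eq0 _ _ kappa x y (fun b => i b - l b) (in2W x_inj)
    (in2W y_inj)) => // a aK.
  rewrite -[RHS](slope0_at a) ffunE aK.
  by apply: eq_bigr => b' _; rewrite mxE mulrC.
apply/eqP; rewrite -oppr_eq0; apply/eqP.
apply: (@cauchy_sum_eq0 _ _ (~: kappa) y x (fun b => - (i b - l b)) (in2W y_inj)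
  (in2W x_inj)) => //.
- by move=> a c _ _; rewrite eq_sym.
- move=> a; rewrite inE => aNK.
  rewrite -[RHS](slope0_at a) ffunE (negbTE aNK).
  apply: eq_big => [b'|b' _]; first by rewrite inE.
  by rewrite mxE -[y a - x b']opprB invrN mulrNN.
by rewrite inE.
Qed.

Theorem proposition6p8 (R : realType) (d n : nat) (x y : 'I_d -> 'F_n) :
  ~~ odd d -> prime n -> (2 * d < n)%N ->
  injective x -> injective y -> (forall a b, x a != y b) ->
  forall kappa : {set 'I_d},
    \rank (to_mx (ptrans kappa (W_T R (cauchy_mx x y)))) = (n ^ d)%N.
Proof.
move=> _ n_prime _ x_inj y_inj xy_neq kappa.
suff W_unit : to_mx (fun i j => chi R (ptrans kappa (bilin (cauchy_mx x y)) i j))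
    \in unitmx.
  by rewrite (mxrank_unit W_unit) card_ffun card_Fp // card_ord.
apply: (unitmx_chi_mx R n_prime (ptrans_bilinB _ kappa)).
by move=> i l; apply: ptrans_bilin_slope_cauchy_eq0.
Qed.
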